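(* Let $d\ge 2$ and consider the $(2,d)$ random access code task: Alice receives $x=x_1x_2$ with $x_1,x_2\in\{1,\dots,d\}$ uniformly at random ($N=d^2$ inputs); Bob receives $y\in\{1,2\}$ uniformly at random and outputs $z\in\{1,\dots,d\}$; the success metric is $\mathcal{S}=\frac{1}{2d^2}\sum_{x,y}p(z=x_y|x,y)$. Let $\mathcal{S}^*=\frac12\left(1+\frac{1}{\sqrt d}\right)$. There exists a quantum protocol (Alice sends states $\rho_x$, Bob performs measurements $\{M_{z|y}\}_z$, $p(z|x,y)=\operatorname{tr}(\rho_x M_{z|y})$) achieving $\mathcal{S}=\mathcal{S}^*$ whose distinguishability $\mathcal{D}_Q$ satisfies the following: every classical protocol achieving success metric at least $\mathcal{S}^*$ has distinguishability $\mathcal{D}_C$ with $\mathcal{D}_C/\mathcal{D}_Q\ge\sqrt d$. (In particular, $\mathcal{D}_Q\le 1/d$ and every such classical protocol has $\mathcal{D}_C\ge 1/\sqrt d$.)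
   Context: Quantum distinguishability: $\mathcal{D}_Q=\max_{\{M_x\}}\frac1N\sum_x\operatorname{tr}(\rho_xM_x)$ over POVMs $\{M_x\}_{x}$ ($M_x\ge0$, $\sum_xM_x=\mathbb 1$), with the Hilbert space dimension unconstrained. A classical protocol consists of an encoding $p_e(m|x)$ over messages $m$ from a finite set of arbitrary size and a decoding $p_d(z|y,m)$, giving $p(z|x,y)=\sum_m p_e(m|x)p_d(z|y,m)$; its distinguishability is $\mathcal{D}_C=\frac1N\sum_m\max_x p_e(m|x)$. *)

From HB Require Import structures.
From mathcomp Require Import all_boot all_order all_algebra.
From mathcomp Require Import complex.
From mathcomp Require Import reals.
Set Implicit Arguments. Unset Strict Implicit. Unset Printing Implicit Defensive.
Import Order.TTheory GRing.Theory Num.Theory.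
Local Open Scope ring_scope.

Section QRAC.
Variable R : realType.
Local Notation C := (R[i]).

Definition adjmx n (A : 'M[C]_n) : 'M[C]_n := (map_mx Num.conj A)^T.

Definition psd n (A : 'M[C]_n) : Prop :=
  adjmx A = A /\ forall v : 'cV[C]_n, 0 <= ((map_mx Num.conj v)^T *m A *m v) ord0 ord0.

Definition density n (rho : 'M[C]_n) : Prop := psd rho /\ \tr rho = 1.

Definition povm n (I : finType) (M : I -> 'M[C]_n) : Prop :=
  (forall i, psd (M i)) /\ \sum_(i : I) M i = 1%:M.

Definition born n (rho M : 'M[C]_n) : R := complex.Re (\tr (rho *m M)).

(* inputs of the (2,d) RAC: x = x_1 x_2 with x_y in {1..d} (here 'I_d) *)
Definition racX (d : nat) := {ffun 'I_2 -> 'I_d}.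

Definition DQ_val n (X : finType) (rho : X -> 'M[C]_n) (M : X -> 'M[C]_n) : R :=
  (#|X|%:R)^-1 * \sum_(x : X) born (rho x) (M x).

Definition is_DQ n (X : finType) (rho : X -> 'M[C]_n) (D : R) : Prop :=
  (exists M : X -> 'M[C]_n, povm M /\ DQ_val rho M = D) /\
  (forall M : X -> 'M[C]_n, povm M -> DQ_val rho M <= D).

Definition rac_success d (p : racX d -> 'I_2 -> 'I_d -> R) : R :=
  ((2 * d ^ 2)%N%:R)^-1 * \sum_(x : racX d) \sum_(y : 'I_2) p x y (x y).

Definition qprob d n (rho : racX d -> 'M[C]_n) (M : 'I_2 -> 'I_d -> 'M[C]_n)
  : racX d -> 'I_2 -> 'I_d -> R :=
  fun x y z => born (rho x) (M y z).

(* classical protocols: encoding p_e(m|x), decoding p_d(z|y,m) *)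
Definition stochastic (A B : finType) (p : A -> B -> R) : Prop :=
  (forall a b, 0 <= p a b) /\ (forall a, \sum_(b : B) p a b = 1).

Definition cprob d (Msg : finType) (pe : racX d -> Msg -> R)
  (pd : 'I_2 -> Msg -> 'I_d -> R) : racX d -> 'I_2 -> 'I_d -> R :=
  fun x y z => \sum_(m : Msg) pe x m * pd y m z.

Definition DC d (Msg : finType) (pe : racX d -> Msg -> R) : R :=
  ((d ^ 2)%N%:R)^-1 * \sum_(m : Msg) \big[Num.max/0]_(x : racX d) pe x m.

End QRAC.

Definition Sstar (R : realType) (d : nat) : R := 2^-1 * (1 + (Num.sqrt (d%:R : R))^-1).

From HB Require Import structures.
From mathcomp Require Import all_boot all_order all_algebra.
From mathcomp Require Import cyclic separable cyclotomic.
From mathcomp Require Import complex reals ring lra.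
Set Implicit Arguments. Unset Strict Implicit. Unset Printing Implicit Defensive.
Import Order.TTheory GRing.Theory Num.Theory.
Local Open Scope ring_scope.

(* Alice encodes x = (a, b) into the normalised sum of the a-th standard basis vector e_a
   and the b-th Fourier basis vector f_b, with the phase of f_b chosen so that the state has
   the same positive overlap with e_a and with f_b; Bob measures in the standard basis for y = 1 and in the Fourier
   basis for y = 2, and guesses right with probability (1 + 1/sqrt d)/2 in both cases.  The
   d^2 pure states form a tight frame, sum_x rho_x = d, so the POVM {rho_x / d} reaches 1/d,
   and nothing does better because tr (rho_x M_x) <= tr M_x for a pure rho_x.  Classically,
   if message m is decoded with probabilities u, v in [0, 1] for the two questions, then
   u + v <= 1 + u v bounds its contribution by its total weight plus its largest weight;
   hence S <= (1 + D_C)/2, and S >= S^* forces D_C >= 1/sqrt d = sqrt d * D_Q. *)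

Lemma prim_root_exists (F : closedFieldType) n :
  n%:R != 0 :> F -> exists z : F, n.-primitive_root z.
Proof.
move=> n_neq0; have n_gt0 : (0 < n)%N by rewrite lt0n; apply: contraNneq n_neq0 => ->.
pose p : {poly F} := 'X^n - 1; have [r Dp] := closed_field_poly_normal p.
rewrite (monicP _) ?monicXnsubC // scale1r in Dp.
have rn1 : all n.-unity_root r by apply/allP => z; rewrite -root_prod_XsubC -Dp.
have sz_r : (n < (size r).+1)%N by rewrite -(size_prod_XsubC r id) -Dp size_XnsubC.
have [|z] := hasP (has_prim_root n_gt0 rn1 _ sz_r); last by exists z.
by rewrite -separable_prod_XsubC -Dp separable_Xn_sub_1.
Qed.

Lemma sum_expr_unity_root (F : idomainType) (u : F) n :
  u ^+ n = 1 -> \sum_(i < n) u ^+ i = (u == 1)%:R * n%:R.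
Proof.
move=> un1; have [->|u_neq1] := eqVneq u 1.
  by under eq_bigr do rewrite expr1n; rewrite sumr_const card_ord mul1r.
have := subrX1 u n; rewrite un1 subrr mul0r => /esym/eqP.
by rewrite mulf_eq0 subr_eq0 (negbTE u_neq1) => /eqP.
Qed.

Lemma sum_prim_root_ratio (F : fieldType) n (w : F) (k l : 'I_n) :
  n.-primitive_root w -> \sum_(b < n) (w ^+ k / w ^+ l) ^+ b = (k == l)%:R * n%:R.
Proof.
move=> w_prim; have n_gt0 := prim_order_gt0 w_prim.
have wl_neq0 : w ^+ l != 0 by rewrite expf_neq0 // (prim_root_eq0 w_prim) -lt0n.
rewrite sum_expr_unity_root.
  by rewrite -(inj_eq (mulIf wl_neq0)) divfK // mul1r (eq_prim_root_expr w_prim) !modn_small.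
by rewrite expr_div_n -!exprM !(mulnC _ n) !exprM (prim_expr_order w_prim) !expr1n divr1.
Qed.

Lemma prim_root_conj (C : numClosedFieldType) n (w : C) :
  n.-primitive_root w -> w^* = w^-1.
Proof.
move=> w_prim; have w_norm1 : `|w| = 1.
  apply/eqP; rewrite -(pexpr_eq1 (prim_order_gt0 w_prim)) // -normrX.
  by rewrite prim_expr_order // normr1.
have w_neq0 : w != 0 by rewrite -normr_eq0 w_norm1 oner_neq0.
by apply: (mulfI w_neq0); rewrite divff // -normCK w_norm1 expr1n.
Qed.

Lemma sumr_ord2 (V : nmodType) (F : 'I_2 -> V) : \sum_(y < 2) F y = F ord0 + F ord_max.
Proof. by rewrite big_ord_recr big_ord1; congr (F _ + _); apply: val_inj. Qed.

Lemma sum_eq_natr_mul (V : pzSemiRingType) (I : finType) (i : I) (F : I -> V) :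
  \sum_j (j == i)%:R * F j = F i.
Proof. by under eq_bigr do rewrite mulr_natl mulrb; rewrite -big_mkcond big_pred1_eq. Qed.

Section RankOne.
Variable R : realType.
Local Notation C := R[i].
(* [Re] is declared additive on the alias [Rcomplex R] only. *)
Local Notation Re := (@complex.Re R : Rcomplex R -> R).

Lemma conjC_real_complex (c : R) : ((c%:C)%C)^* = (c%:C)%C :> C.
Proof. exact: conjc_real. Qed.

Definition adjcv n (v : 'cV[C]_n) : 'rV[C]_n := (map_mx Num.conj v)^T.
Definition dotc n (u v : 'cV[C]_n) : C := (adjcv u *m v) 0 0.
Definition ketbra n (v : 'cV[C]_n) : 'M[C]_n := v *m adjcv v.

Lemma dotcE n (u v : 'cV[C]_n) : dotc u v = \sum_k (u k 0)^* * v k 0.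
Proof. by rewrite /dotc mxE; apply: eq_bigr => k _; rewrite !mxE. Qed.

Lemma dotcC n (u v : 'cV[C]_n) : dotc u v = (dotc v u)^*.
Proof.
rewrite !dotcE rmorph_sum; apply: eq_bigr => k _.
by rewrite rmorphM /= conjCK mulrC.
Qed.

Lemma dotcDr n (u v1 v2 : 'cV[C]_n) : dotc u (v1 + v2) = dotc u v1 + dotc u v2.
Proof. by rewrite /dotc mulmxDr mxE. Qed.

Lemma dotcZr n (u v : 'cV[C]_n) a : dotc u (a *: v) = a * dotc u v.
Proof. by rewrite /dotc -scalemxAr mxE. Qed.

Lemma dotcDl n (u1 u2 v : 'cV[C]_n) : dotc (u1 + u2) v = dotc u1 v + dotc u2 v.
Proof. by rewrite dotcC dotcDr rmorphD /= -!dotcC. Qed.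

Lemma dotcZl n (u v : 'cV[C]_n) a : dotc (a *: u) v = a^* * dotc u v.
Proof. by rewrite dotcC dotcZr rmorphM /= -dotcC. Qed.

Lemma ketbraE n (v : 'cV[C]_n) k l : ketbra v k l = v k 0 * (v l 0)^*.
Proof. by rewrite mxE big_ord1 !mxE. Qed.

Lemma tr_ketbra n (v : 'cV[C]_n) : \tr (ketbra v) = dotc v v.
Proof. by rewrite mxtrace_mulC trace_mx11. Qed.

Lemma ketbra_mulmx n (u v : 'cV[C]_n) : ketbra u *m ketbra v = dotc u v *: (u *m adjcv v).
Proof. by rewrite /ketbra mulmxA -(mulmxA u) [adjcv u *m v]mx11_scalar mul_mx_scalar scalemxAl. Qed.

Lemma tr_ketbraM n (u v : 'cV[C]_n) : \tr (ketbra u *m ketbra v) = dotc v u * (dotc v u)^*.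
Proof. by rewrite ketbra_mulmx linearZ /= mxtrace_mulC trace_mx11 -dotcC mulrC. Qed.

Lemma ketbra_idem n (v : 'cV[C]_n) : dotc v v = 1 -> ketbra v *m ketbra v = ketbra v.
Proof. by move=> v_unit; rewrite ketbra_mulmx v_unit scale1r. Qed.

Lemma psd_ketbra n (v : 'cV[C]_n) : psd (ketbra v).
Proof.
split.
  by apply/matrixP => i j; rewrite /adjmx 2!mxE !ketbraE rmorphM /= conjCK mulrC.
move=> u; rewrite -/(adjcv u) /ketbra mulmxA [adjcv u *m v]mx11_scalar.
by rewrite mul_scalar_mx -scalemxAl mxE -/(dotc u v) -/(dotc v u) (dotcC v u) -normCK exprn_ge0.
Qed.

Lemma psdZ n (c : R) (P : 'M[C]_n) : 0 <= c -> psd P -> psd ((c%:C)%C *: P).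
Proof.
move=> c_ge0 [P_herm P_ge0]; split.
  by apply/matrixP => i j; rewrite -{2}P_herm /adjmx !mxE rmorphM /= conjC_real_complex.
move=> v; rewrite -scalemxAr -scalemxAl mxE.
by apply: mulr_ge0; [rewrite ler0c | exact: P_ge0].
Qed.

Lemma tr_herm_sandwich_ge0 n (A M : 'M[C]_n) :
  adjmx A = A -> psd M -> 0 <= \tr (A *m M *m A).
Proof.
move=> A_herm [_ M_ge0]; apply: sumr_ge0 => k _.
have -> : (A *m M *m A) k k = (row k A *m M *m col k A) 0 0.
  by rewrite -row_mul !mxE; apply: eq_bigr => j _; rewrite !mxE.
have -> : row k A = adjcv (col k A).
  by apply/matrixP => i j; rewrite !mxE -{1}A_herm /adjmx !mxE.
exact: M_ge0.
Qed.

Lemma bornZr n (rho M : 'M[C]_n) (c : R) : born rho ((c%:C)%C *: M) = c * born rho M.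
Proof.
rewrite /born -scalemxAr linearZ /=.
by case: (\tr (rho *m M)) => a b /=; rewrite mul0r subr0.
Qed.

(* [1 - ketbra v] is a Hermitian projection, so [tr M - tr (ketbra v M)] is the
   trace of the positive matrix [(1 - ketbra v) M (1 - ketbra v)]. *)
Lemma born_ketbra_le n (v : 'cV[C]_n) (M : 'M[C]_n) :
  dotc v v = 1 -> psd M -> born (ketbra v) M <= Re (\tr M).
Proof.
move=> v_unit M_psd; rewrite -subr_ge0 /born -(raddfB Re).
set A := 1%:M - ketbra v.
have A_herm : adjmx A = A.
  have [kb_herm _] := psd_ketbra v.
  by rewrite /A /adjmx map_mxB linearB /= map_mx1 trmx1 -/(adjmx _) kb_herm.
have A_idem : A *m A = A.
  by rewrite /A mulmxBl !mulmxBr !mul1mx mulmx1 ketbra_idem // subrr subr0.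
have -> : \tr M - \tr (ketbra v *m M) = \tr (A *m M *m A).
  by rewrite [RHS]mxtrace_mulC [in RHS]mulmxA A_idem /A mulmxBl mul1mx linearB.
by have := tr_herm_sandwich_ge0 A_herm M_psd; rewrite lecE => /andP[].
Qed.

Lemma is_DQ_tight_frame n (X : finType) (v : X -> 'cV[C]_n) (c : R) :
  (0 < n)%N -> 0 < c -> (forall x, dotc (v x) (v x) = 1) ->
  \sum_x ketbra (v x) = (c%:C)%C *: 1%:M ->
  is_DQ (fun x => ketbra (v x)) c^-1.
Proof.
move=> n_gt0 c_gt0 v_unit frame.
have card_X : #|X|%:R = c * n%:R.
  apply: (@complexI R); rewrite rmorphM /= !rmorph_nat.
  have := congr1 mxtrace frame; rewrite raddf_sum linearZ /= mxtrace1.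
  by under eq_bigr do rewrite tr_ketbra v_unit; rewrite sumr_const.
have card_X_neq0 : #|X|%:R != 0 :> R by rewrite card_X mulf_neq0 ?gt_eqF ?ltr0n.
split.
  exists (fun x => (c^-1%:C)%C *: ketbra (v x)); split.
    split=> [x|]; first by apply: psdZ; [rewrite invr_ge0 ltW | exact: psd_ketbra].
    by rewrite -scaler_sumr frame scalerA -rmorphM mulVf ?gt_eqF // scale1r.
  rewrite /DQ_val; under eq_bigr do rewrite bornZr /born ketbra_idem // tr_ketbra v_unit.
  by rewrite sumr_const -[c^-1 * _ *+ _]mulr_natl mulr1; apply: mulKf.
move=> M [M_psd sumM]; rewrite /DQ_val.
apply: (@le_trans _ _ (#|X|%:R^-1 * Re (\tr (\sum_x M x)))).
  rewrite ler_wpM2l ?invr_ge0 ?ler0n // (raddf_sum (@mxtrace _ n)) (raddf_sum Re).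
  by apply: ler_sum => x _; apply: born_ketbra_le; last case: (M_psd x).
by rewrite sumM mxtrace1 -(rmorph_nat (real_complex R)) card_X invfM /= divfK // pnatr_eq0 -lt0n.
Qed.

Lemma dotc_delta n (i : 'I_n) (u : 'cV[C]_n) :
  dotc (delta_mx i 0) u = u i 0.
Proof.
rewrite dotcE (bigD1 i) //= big1 => [|k ki]; rewrite !mxE ?eqxx /=.
  by rewrite conjC1 mul1r addr0.
by rewrite (negbTE ki) /= conjC0 mul0r.
Qed.

Lemma ketbra_delta n (i : 'I_n) : ketbra (delta_mx i 0) = delta_mx i i :> 'M[C]_n.
Proof.
by apply/matrixP => k l; rewrite ketbraE !mxE !andbT conjC_nat -natrM mulnb.
Qed.

Lemma sum_ketbra_delta n : \sum_(i < n) ketbra (delta_mx i 0) = 1%:M :> 'M[C]_n.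
Proof. by rewrite mx1_sum_delta; apply: eq_bigr => i _; rewrite ketbra_delta. Qed.

End RankOne.

Section RacInputs.
Variable d : nat.

Definition rac_input (a b : 'I_d) : racX d := [ffun y => if y == ord0 then a else b].

Lemma rac_inputK (x : racX d) : rac_input (x ord0) (x ord_max) = x.
Proof. by apply/ffunP => -[[|[|//]] y_lt2]; rewrite ffunE /=; congr (x _); apply: val_inj. Qed.

Lemma sum_racX (V : nmodType) (F : racX d -> V) :
  \sum_x F x = \sum_a \sum_b F (rac_input a b).
Proof.
rewrite pair_big /= (reindex (fun p => rac_input p.1 p.2)) //.
by exists (fun x : racX d => (x ord0, x ord_max)) => [[a b] _|x _]; rewrite ?ffunE ?rac_inputK.
Qed.

Lemma card_racX : #|racX d| = (d ^ 2)%N.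
Proof. by rewrite card_ffun !card_ord. Qed.

End RacInputs.

Section RacConstruction.
Variables (R : realType) (d : nat) (w : R[i]).
Hypothesis w_prim : d.-primitive_root w.
Local Notation C := R[i].

Definition mub_overlap : R := (Num.sqrt (d%:R : R))^-1.
Definition rac_scale : R := (Num.sqrt (2 + 2 * mub_overlap))^-1.
Local Notation s := mub_overlap.
Local Notation K := rac_scale.
Local Notation sC := (s%:C)%C.
Local Notation KC := (K%:C)%C.

Let d_gt0 : (0 < d)%N. Proof. exact: prim_order_gt0 w_prim. Qed.

Let mub_overlap_ge0 : 0 <= s. Proof. by rewrite invr_ge0 sqrtr_ge0. Qed.

Let rac_norm_gt0 : 0 < 2 + 2 * s. Proof. by rewrite ltr_wpDr ?mulr_ge0. Qed.

Let wX_neq0 k : w ^+ k != 0.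
Proof. by rewrite expf_neq0 // (prim_root_eq0 w_prim) -lt0n. Qed.

Let conj_wX k : (w ^+ k)^* = (w ^+ k)^-1.
Proof. by rewrite rmorphXn /= (prim_root_conj w_prim) exprVn. Qed.

Let conj_wXV k : ((w ^+ k)^-1)^* = w ^+ k.
Proof. by rewrite fmorphV /= conj_wX invrK. Qed.

Lemma mub_overlapC_sqr : sC * sC * d%:R = 1.
Proof.
rewrite -(rmorph_nat (real_complex R)) -!rmorphM /= -expr2 exprVn.
by rewrite sqr_sqrtr ?ler0n // mulVf // pnatr_eq0 -lt0n.
Qed.

Lemma rac_scaleC_sqr : KC * KC * (2 + 2 * sC) = 1.
Proof.
rewrite -[2 : C](rmorph_nat (real_complex R)) -!rmorphM -rmorphD -!rmorphM /=.
by rewrite -expr2 exprVn sqr_sqrtr ?ltW // mulVf ?gt_eqF.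
Qed.

Definition fourier_vec (b : 'I_d) : 'cV[C]_d := \col_k (sC * w ^+ (k * b)).

Definition rac_state (a b : 'I_d) : 'cV[C]_d :=
  KC *: (delta_mx a 0 + (w ^+ (a * b))^-1 *: fourier_vec b).

Lemma dotc_fourier b : dotc (fourier_vec b) (fourier_vec b) = 1.
Proof.
rewrite dotcE (eq_bigr (fun _ => sC * sC)) => [|k _].
  by rewrite sumr_const card_ord -[sC * sC *+ _]mulr_natr mub_overlapC_sqr.
by rewrite !mxE rmorphM /= conjC_real_complex conj_wX mulrACA mulVf // mulr1.
Qed.

Lemma dotc_delta_fourier a b : dotc (delta_mx a 0) (fourier_vec b) = sC * w ^+ (a * b).
Proof. by rewrite dotc_delta mxE. Qed.

Lemma dotc_delta_rac_state a b : dotc (delta_mx a 0) (rac_state a b) = KC * (1 + sC).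
Proof.
rewrite dotcZr dotcDr dotcZr dotc_delta_fourier dotc_delta mxE eqxx /=.
by rewrite mulrCA mulVf // mulr1.
Qed.

Lemma dotc_fourier_rac_state a b :
  dotc (fourier_vec b) (rac_state a b) = KC * (1 + sC) / w ^+ (a * b).
Proof.
rewrite dotcZr dotcDr dotcZr dotc_fourier dotcC dotc_delta_fourier.
by rewrite rmorphM /= conjC_real_complex conj_wX; ring.
Qed.

Lemma dotc_rac_state a b : dotc (rac_state a b) (rac_state a b) = 1.
Proof.
rewrite /rac_state dotcZl dotcZr dotcDl !dotcDr !dotcZl !dotcZr dotc_fourier.
rewrite [dotc (fourier_vec b) _]dotcC !dotc_delta_fourier dotc_delta mxE eqxx /=.
rewrite !rmorphM /= !conjC_real_complex conj_wX conj_wXV.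
by rewrite -[RHS]rac_scaleC_sqr; field; rewrite wX_neq0.
Qed.

Lemma rac_scale_sqr_overlap : (K * (1 + s)) ^+ 2 = (1 + s) / 2.
Proof.
by rewrite exprMn exprVn sqr_sqrtr ?ltW //; field; rewrite gt_eqF.
Qed.

Lemma born_rac_state_delta a b :
  born (ketbra (rac_state a b)) (ketbra (delta_mx a 0)) = (1 + s) / 2.
Proof.
rewrite /born tr_ketbraM dotc_delta_rac_state.
have -> : KC * (1 + sC) = (K * (1 + s))%:C%C by rewrite rmorphM rmorphD rmorph1.
by rewrite conjC_real_complex -rmorphM -expr2 rac_scale_sqr_overlap.
Qed.

Lemma born_rac_state_fourier a b :
  born (ketbra (rac_state a b)) (ketbra (fourier_vec b)) = (1 + s) / 2.
Proof.
rewrite /born tr_ketbraM dotc_fourier_rac_state rmorphM /= conj_wXV mulrACA mulVf //.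
have -> : KC * (1 + sC) = (K * (1 + s))%:C%C by rewrite rmorphM rmorphD rmorph1.
by rewrite mulr1 conjC_real_complex -rmorphM -expr2 rac_scale_sqr_overlap.
Qed.

Lemma sum_ketbra_fourier : \sum_b ketbra (fourier_vec b) = 1%:M.
Proof.
apply/matrixP => k l; rewrite summxE.
transitivity (sC * sC * \sum_(b < d) (w ^+ k / w ^+ l) ^+ b).
  rewrite mulr_sumr; apply: eq_bigr => b _.
  rewrite ketbraE !mxE rmorphM /= conjC_real_complex conj_wX expr_div_n -!exprM.
  by rewrite [(k * b)%N]mulnC [(l * b)%N]mulnC; ring.
by rewrite sum_prim_root_ratio // !mxE mulrCA mub_overlapC_sqr mulr1.
Qed.

Lemma rac_stateE a b k : rac_state a b k 0 = KC * ((k == a)%:R + sC * (w ^+ k / w ^+ a) ^+ b).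
Proof.
rewrite !mxE andbT expr_div_n -!exprM [(k * b)%N]mulnC [(a * b)%N]mulnC.
by congr (_ * (_ + _)); ring.
Qed.

Lemma ketbra_rac_stateE a b k l : ketbra (rac_state a b) k l =
  KC * KC * ((a == k)%:R * (a == l)%:R + (a == k)%:R * (sC * (w ^+ a / w ^+ l) ^+ b)
    + (a == l)%:R * (sC * (w ^+ k / w ^+ a) ^+ b) + sC * sC * (w ^+ k / w ^+ l) ^+ b).
Proof.
rewrite ketbraE !rac_stateE (eq_sym k) (eq_sym l) rmorphM rmorphD rmorphM /=.
rewrite !conjC_real_complex conjC_nat.
rewrite rmorphXn rmorphM /= conj_wX conj_wXV.
have -> : (w ^+ k / w ^+ l) ^+ b = (w ^+ k / w ^+ a) ^+ b * (w ^+ a / w ^+ l) ^+ b.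
  by rewrite -exprMn mulrA divfK.
by rewrite [(w ^+ l)^-1 * _]mulrC; ring.
Qed.

Lemma sum_ketbra_rac_state :
  \sum_a \sum_b ketbra (rac_state a b) = (d%:R)%:C%C *: 1%:M.
Proof.
apply/matrixP => k l; rewrite summxE; under eq_bigr do rewrite summxE.
rewrite exchange_big /=.
have sum_a b : \sum_a ketbra (rac_state a b) k l =
    KC * KC * ((k == l)%:R + (2 + d%:R * sC) * sC * (w ^+ k / w ^+ l) ^+ b).
  under eq_bigr do rewrite ketbra_rac_stateE.
  rewrite -mulr_sumr !big_split /= !sum_eq_natr_mul sumr_const card_ord.
  by rewrite -[_ *+ d]mulr_natr; ring.
under eq_bigr do rewrite sum_a.
rewrite -mulr_sumr big_split /= sumr_const card_ord -mulr_sumr sum_prim_root_ratio //.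
rewrite !mxE rmorph_nat -[_ *+ d]mulr_natr.
transitivity ((k == l)%:R * d%:R * (KC * KC * (1 + 2 * sC + sC * sC * d%:R))); first ring.
have -> : 1 + 2 * sC + sC * sC * d%:R = 2 + 2 * sC by rewrite mub_overlapC_sqr; ring.
by rewrite rac_scaleC_sqr mulr1 mulrC.
Qed.

Definition rac_rho (x : racX d) : 'M[C]_d := ketbra (rac_state (x ord0) (x ord_max)).

Definition rac_meas (y : 'I_2) (z : 'I_d) : 'M[C]_d :=
  if y == ord0 then ketbra (delta_mx z 0) else ketbra (fourier_vec z).

Lemma rac_rho_density x : density (rac_rho x).
Proof. by split; [exact: psd_ketbra | rewrite tr_ketbra dotc_rac_state]. Qed.

Lemma rac_meas_povm y : povm (rac_meas y).
Proof.
rewrite /rac_meas; case: (y == ord0); split=> [z|]; try exact: psd_ketbra.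
  exact: sum_ketbra_delta.
exact: sum_ketbra_fourier.
Qed.

Lemma rac_success_quantum : rac_success (qprob rac_rho rac_meas) = Sstar R d.
Proof.
rewrite /rac_success /qprob.
under eq_bigr do rewrite sumr_ord2 /rac_rho /rac_meas /= born_rac_state_delta born_rac_state_fourier.
rewrite sumr_const card_racX /Sstar -/mub_overlap -[(_ + _) *+ _]mulr_natr natrM natrX.
by field; rewrite pnatr_eq0 -lt0n.
Qed.

Lemma rac_is_DQ : is_DQ rac_rho (d%:R)^-1.
Proof.
apply: (@is_DQ_tight_frame R d (racX d) (fun x => rac_state (x ord0) (x ord_max)) d%:R).
- exact: d_gt0.
- by rewrite ltr0n.
- by move=> x; exact: dotc_rac_state.
rewrite sum_racX -sum_ketbra_rac_state.
by apply: eq_bigr => a _; apply: eq_bigr => b _; rewrite !ffunE.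
Qed.

End RacConstruction.

Section ClassicalBound.
Variables (R : realType) (d : nat).

Lemma le1_sum_eq1 (I : finType) (u : I -> R) i :
  (forall j, 0 <= u j) -> \sum_j u j = 1 -> u i <= 1.
Proof. by move=> u_ge0 <-; rewrite (bigD1 i) //= lerDl sumr_ge0. Qed.

Lemma decoding_gain_le (q : racX d -> R) (u v : 'I_d -> R) :
  (forall x, 0 <= q x) ->
  (forall i, 0 <= u i) -> \sum_i u i = 1 -> (forall j, 0 <= v j) -> \sum_j v j = 1 ->
  \sum_x q x * (u (x ord0) + v (x ord_max)) <= \sum_x q x + \big[Num.max/0]_x q x.
Proof.
move=> q_ge0 u_ge0 u_sum1 v_ge0 v_sum1.
have uv_sum1 : \sum_(x : racX d) u (x ord0) * v (x ord_max) = 1.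
  rewrite sum_racX -[1]mulr1 -{1}u_sum1 -v_sum1 big_distrlr /=.
  by apply: eq_bigr => i _; apply: eq_bigr => j _; rewrite !ffunE.
apply: (@le_trans _ _ (\sum_x (q x + \big[Num.max/0]_x' q x' * (u (x ord0) * v (x ord_max))))).
  apply: ler_sum => x _; set a := u (x ord0); set b := v (x ord_max).
  have gain : a + b <= 1 + a * b.
    have : 0 <= (1 - a) * (1 - b) by rewrite mulr_ge0 // subr_ge0 le1_sum_eq1.
    nra.
  apply: (le_trans (ler_wpM2l (q_ge0 x) gain)).
  by rewrite mulrDr mulr1 lerD2l ler_wpM2r ?mulr_ge0 ?u_ge0 ?v_ge0 //; exact: le_bigmax.
by rewrite big_split /= -mulr_sumr uv_sum1 mulr1.
Qed.

Lemma rac_success_classical (Msg : finType) (pe : racX d -> Msg -> R)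
    (pd : 'I_2 -> Msg -> 'I_d -> R) :
  (0 < d)%N -> stochastic pe -> (forall y, stochastic (pd y)) ->
  rac_success (cprob pe pd) <= (1 + DC pe) / 2.
Proof.
move=> d_gt0 [pe_ge0 pe_sum1] pd_st; rewrite /rac_success /cprob /DC.
under eq_bigr do rewrite sumr_ord2 -big_split /=.
under eq_bigr do under eq_bigr do rewrite -mulrDr.
rewrite exchange_big /=.
apply: (@le_trans _ _ (((2 * d ^ 2)%N%:R)^-1 *
    \sum_m (\sum_x pe x m + \big[Num.max/0]_x pe x m))).
  rewrite ler_wpM2l ?invr_ge0 ?ler0n //; apply: ler_sum => m _.
  have [pd0_ge0 pd0_sum1] := pd_st ord0; have [pd1_ge0 pd1_sum1] := pd_st ord_max.
  exact: decoding_gain_le.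
rewrite big_split /= exchange_big /=; under eq_bigr do rewrite pe_sum1.
rewrite sumr_const card_racX natrM natrX.
rewrite le_eqVlt; apply/predU1P; left.
by rewrite -[1 *+ _]mulr_natr mul1r; field; rewrite pnatr_eq0 -lt0n.
Qed.

End ClassicalBound.

Theorem theorem2 (R : realType) (d : nat) (hd : (2 <= d)%N) :
  exists (n : nat) (rho : racX d -> 'M[R[i]]_n) (M : 'I_2 -> 'I_d -> 'M[R[i]]_n)
         (DQ : R),
    (forall x, density (rho x)) /\ (forall y, povm (M y)) /\
    rac_success (qprob rho M) = Sstar R d /\
    is_DQ rho DQ /\ DQ <= (d%:R)^-1 /\
    forall (Msg : finType) (pe : racX d -> Msg -> R) (pd : 'I_2 -> Msg -> 'I_d -> R),
      stochastic pe -> (forall y, stochastic (pd y)) ->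
      Sstar R d <= rac_success (cprob pe pd) ->
      Num.sqrt (d%:R : R) <= DC pe / DQ /\ (Num.sqrt (d%:R : R))^-1 <= DC pe.
Proof.
have d_gt0 : (0 < d)%N by apply: leq_trans hd.
have [w w_prim] : exists w : R[i], d.-primitive_root w.
  by apply: prim_root_exists; rewrite pnatr_eq0 -lt0n.
exists d, (@rac_rho R d w), (@rac_meas R d w), (d%:R)^-1.
split; first exact: rac_rho_density.
split; first exact: rac_meas_povm.
split; first exact: rac_success_quantum.
split; first exact: rac_is_DQ.
split=> // Msg pe pd pe_st pd_st success_ge.
have DC_ge : (Num.sqrt (d%:R : R))^-1 <= DC pe.
  by have := rac_success_classical d_gt0 pe_st pd_st; rewrite /Sstar in success_ge; lra.
split=> //; rewrite invrK mulrC.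
have -> : Num.sqrt (d%:R : R) = d%:R * (Num.sqrt (d%:R : R))^-1.
  by rewrite -{2}(sqr_sqrtr (ler0n R d)) expr2 mulrK // unitfE sqrtr_eq0 -ltNge ltr0n.
by rewrite ler_wpM2l ?ler0n.
Qed.
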